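(* Let $d\ge 1$ and $a=(a_1,\dots,a_d)\in\mathbb{R}^d$. Then $a$ is a Nuij sequence if and only if the polynomial $$q_a(z):=z^d+\sum_{k=1}^d a_k (z^d)^{(k)} = z^d+\sum_{k=1}^d a_k\frac{d!}{(d-k)!}z^{d-k}$$ is hyperbolic.
   Context: A polynomial $p\in\mathbb{R}[z]$ is called hyperbolic if all its roots are real. A sequence $a=(a_1,\dots,a_d)\in\mathbb{R}^d$ is called a Nuij sequence if for every hyperbolic polynomial $p\in\mathbb{R}[z]$ of degree $d$, the polynomial $p_a(z,s):=p(z)+\sum_{k=1}^d a_k s^k p^{(k)}(z)\in\mathbb{R}[z]$ is hyperbolic for every $s\in\mathbb{R}$. Here $p^{(k)}$ denotes the $k$-th derivative with respect to $z$. *)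

From mathcomp Require Import all_boot all_order all_algebra.
From mathcomp Require Import reals.
Set Implicit Arguments. Unset Strict Implicit. Unset Printing Implicit Defensive.
Import Order.TTheory GRing.Theory Num.Theory.
Local Open Scope ring_scope.

Definition hyperbolic (R : realType) (p : {poly R}) : Prop :=
  p != 0 /\ exists s : seq R, p = lead_coef p *: \prod_(x <- s) ('X - x%:P).

(* p_a(z,s) = p(z) + sum_{k=1}^d a_k s^k p^(k)(z), with a : 'I_d -> R,
   a (k-1) = a_k. *)
Definition nuij_poly (R : realType) (d : nat) (a : 'I_d -> R)
  (p : {poly R}) (s : R) : {poly R} :=
  p + \sum_(k < d) (a k * s ^+ k.+1) *: p^`(k.+1).

Definition is_Nuij (R : realType) (d : nat) (a : 'I_d -> R) : Prop :=
  forall p : {poly R}, (size p).-1 = d -> hyperbolic p ->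
    forall s : R, hyperbolic (nuij_poly a p s).

Definition q_poly (R : realType) (d : nat) (a : 'I_d -> R) : {poly R} :=
  'X^d + \sum_(k < d) a k *: ('X^d)^`(k.+1).

(* Write p_a(., s) = phi_s(D) p with phi_s(t) = 1 + sum_k a_k s^k t^k.  Taking
   p = z^d and s = 1 shows that q_a = phi_1(D) z^d must be hyperbolic.
   Conversely, phi(D) p is hyperbolic for every hyperbolic p of degree n as soon
   as phi(D) z^n is.  Indeed, for p = c prod_j (z - l_j) and z in the upper
   half-plane, (phi(D) p)(z) is computed by peeling off the factors one at a
   time, each step replacing phi by phi' + (z - l_j) phi; by Laguerre's theorem
   on polar derivatives, this keeps phi(D) z^n zero-free in the upper half-plane,
   so (phi(D) p)(z) <> 0.  Finally phi_s(D) z^d = s^d q_a(z / s) is hyperbolic. *)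

From mathcomp Require Import all_boot all_order all_algebra.
From mathcomp Require Import reals complex ring lra.
Set Implicit Arguments. Unset Strict Implicit. Unset Printing Implicit Defensive.
Import Order.TTheory GRing.Theory Num.Theory.
Local Open Scope ring_scope.

Local Notation Re := (@complex.Re _).
Local Notation Im := (@complex.Im _).

Section DiffOperator.
Variable K : comNzRingType.
Implicit Types (phi psi p q : {poly K}) (c l x : K).

Definition diffop phi p := \sum_(i < size phi) phi`_i *: p^`(i).

Lemma diffop_widen phi p n : (size phi <= n)%N ->
  diffop phi p = \sum_(i < n) phi`_i *: p^`(i).
Proof.
move=> le_phi_n; rewrite /diffop (big_ord_widen n (fun i => phi`_i *: p^`(i)) le_phi_n).
rewrite big_mkcond /=; apply: eq_bigr => i _.
by case: ltnP => // ?; rewrite nth_default // scale0r.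
Qed.

Lemma diffopD phi psi p : diffop (phi + psi) p = diffop phi p + diffop psi p.
Proof.
set n := maxn (size phi) (size psi).
rewrite (@diffop_widen (phi + psi) _ n) ?(leq_trans (size_polyD _ _)) //.
rewrite (@diffop_widen phi _ n) ?leq_maxl // (@diffop_widen psi _ n) ?leq_maxr //.
by rewrite -big_split /=; apply: eq_bigr => i _; rewrite coefD scalerDl.
Qed.

Lemma diffopZ c phi p : diffop (c *: phi) p = c *: diffop phi p.
Proof.
rewrite (@diffop_widen (c *: phi) _ (size phi)) ?size_scale_leq //.
by rewrite /diffop scaler_sumr; apply: eq_bigr => i _; rewrite coefZ scalerA.
Qed.

Lemma diffop_sum (I : Type) (r : seq I) (F : I -> {poly K}) p :
  diffop (\sum_(i <- r) F i) p = \sum_(i <- r) diffop (F i) p.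
Proof.
elim: r => [|i r IH]; last by rewrite !big_cons diffopD IH.
by rewrite !big_nil /diffop size_poly0 big_ord0.
Qed.

Lemma diffopDr phi p q : diffop phi (p + q) = diffop phi p + diffop phi q.
Proof.
by rewrite /diffop -big_split; apply: eq_bigr => i _; rewrite derivnD scalerDr.
Qed.

Lemma diffopZr c phi p : diffop phi (c *: p) = c *: diffop phi p.
Proof.
rewrite /diffop scaler_sumr; apply: eq_bigr => i _.
by rewrite derivnZ !scalerA mulrC.
Qed.

Lemma diffop_deriv phi p : diffop phi p^`() = (diffop phi p)^`().
Proof.
rewrite /diffop raddf_sum; apply: eq_bigr => i _.
by rewrite /= derivZ -derivSn derivnS.
Qed.

Lemma diffop1 phi : diffop phi 1 = (phi`_0)%:P.
Proof.
rewrite (@diffop_widen phi _ (size phi).+1) // big_ord_recl big1 ?addr0.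
  by rewrite derivn0 -mul_polyC mulr1.
by move=> i _; rewrite -polyC1 derivnC scaler0.
Qed.

Lemma diffop_Xn m p : diffop 'X^m p = p^`(m).
Proof.
rewrite /diffop size_polyXn (bigD1 ord_max) //= coefXn eqxx scale1r.
rewrite big1 ?addr0 // => i /eqP ne_i_m; rewrite coefXn.
case: eqP => [eq_i_m|]; last by rewrite scale0r.
by case: ne_i_m; apply: val_inj.
Qed.

Lemma diffopC c p : diffop c%:P p = c *: p.
Proof. by rewrite -alg_polyC -(expr0 'X) diffopZ diffop_Xn. Qed.

Lemma size_deriv_le p : (size p^`() <= size p)%N.
Proof. exact: leq_trans (size_poly _ _) (leq_pred _). Qed.

Lemma size_derivn_le p i : (size p^`(i) <= size p)%N.
Proof.
elim: i => [|i IH]; first by rewrite derivn0.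
by rewrite derivnS (leq_trans (size_deriv_le _)).
Qed.

Lemma size_diffop phi p : (size (diffop phi p) <= size p)%N.
Proof.
apply: (big_ind (fun q => size q <= size p)%N); first by rewrite size_poly0.
  by move=> q r sq sr; rewrite (leq_trans (size_polyD _ _)) // geq_max sq sr.
by move=> i _; rewrite (leq_trans (size_scale_leq _ _)) ?size_derivn_le.
Qed.

Lemma derivn_mulX p i : ('X * p)^`(i) = 'X * p^`(i) + p^`(i.-1) *+ i.
Proof.
case: i => [|i]; first by rewrite mulr0n addr0.
have := derivnMXaddC i p 0; rewrite polyC0 !addr0 mulrC => ->.
by rewrite addrC mulrC.
Qed.

Lemma diffop_mulX phi p :
  diffop phi ('X * p) = 'X * diffop phi p + diffop phi^`() p.
Proof.
rewrite (@diffop_widen phi _ (size phi).+1) // (@diffop_widen phi p (size phi).+1) //.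
rewrite (@diffop_widen phi^`() p (size phi)) ?size_deriv_le //.
under eq_bigr do rewrite derivn_mulX scalerDr scalerAr.
rewrite big_split /= -mulr_sumr; congr (_ + _).
rewrite big_ord_recl mulr0n scaler0 add0r; apply: eq_bigr => i _.
by rewrite coef_deriv lift0 -scalerMnr scalerMnl.
Qed.

Lemma horner_diffop_mulXsubC phi l q x :
  (diffop phi (('X - l%:P) * q)).[x] = (diffop (phi^`() + (x - l) *: phi) q).[x].
Proof.
rewrite mulrBl mul_polyC -scaleNr diffopDr diffopZr diffop_mulX diffopD diffopZ.
rewrite !hornerE; ring.
Qed.

End DiffOperator.

Lemma map_diffop (K L : fieldType) (f : {rmorphism K -> L}) phi p :
  map_poly f (diffop phi p) = diffop (map_poly f phi) (map_poly f p).
Proof.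
rewrite /diffop size_map_poly rmorph_sum /=; apply: eq_bigr => i _.
by rewrite coef_map derivn_map linearZ.
Qed.

Lemma horner_deriv_prod_XsubC (K : fieldType) (rs : seq K) z :
  all (fun r => z != r) rs ->
  (\prod_(r <- rs) ('X - r%:P))^`().[z] =
  (\prod_(r <- rs) ('X - r%:P)).[z] * \sum_(r <- rs) (z - r)^-1.
Proof.
elim: rs => [|r rs IH] /=; first by rewrite !big_nil mulr0 -polyC1 derivC horner0.
case/andP => z_neq_r /IH {}IH.
rewrite !big_cons derivM derivXsubC mul1r hornerD !hornerM IH hornerXsubC.
have r_z_unit : (z - r) * (z - r)^-1 = 1 by rewrite mulfV // subr_eq0.
by rewrite [RHS]mulrDr mulrAC r_z_unit mul1r mulrA.
Qed.

Section UpperHalfPlane.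
Variable R : rcfType.
Local Notation C := R[i].
Local Notation sqn u := (Re u ^+ 2 + Im u ^+ 2).

Lemma sqn_ge0 (u : C) : 0 <= sqn u.
Proof. by rewrite addr_ge0 ?sqr_ge0. Qed.

Lemma sqn_eq0 (u : C) : (sqn u == 0) = (u == 0).
Proof.
case: u => a b; rewrite eq_complex /= paddr_eq0 ?sqr_ge0 //.
by rewrite !sqrf_eq0.
Qed.

Lemma sqn_inv (u : C) : sqn u^-1 = (sqn u)^-1.
Proof.
case: u => a b /=; rewrite sqrrN !exprMn -mulrDl.
have [->|n_neq0] := eqVneq (a ^+ 2 + b ^+ 2) 0; first by rewrite invr0 mul0r.
by rewrite exprVn expr2 invfM mulrA mulfV ?mul1r.
Qed.

Lemma Im_inv (u : C) : Im u^-1 = - Im u * sqn u^-1.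
Proof. by rewrite sqn_inv; case: u => a b /=; rewrite mulNr. Qed.

Lemma Im_inv_bound (c : R) (u : C) : c <= Im u -> c * sqn u^-1 + Im u^-1 <= 0.
Proof.
move=> le_c_u; rewrite [in X in _ + X]Im_inv mulNr -mulrBl.
by rewrite mulr_le0_ge0 ?sqn_ge0 // subr_le0.
Qed.

Lemma sqn_sum_le (I : Type) (r : seq I) (F : I -> C) :
  sqn (\sum_(i <- r) F i) <= (size r)%:R * \sum_(i <- r) sqn (F i).
Proof.
elim: r => [|i r IH]; first by rewrite !big_nil mulr0 le_eqVlt sqn_eq0 eqxx.
rewrite !big_cons !raddfD /= -natr1.
set A := Re _ in IH *; set B := Im _ in IH *; set T := \sum_(j <- r) _ in IH *.
set k : R := (size r)%:R in IH *.
have k_ge0 : 0 <= k by rewrite ler0n.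
have T_ge0 : 0 <= T by rewrite sumr_ge0 // => j _; rewrite sqn_ge0.
set a := Re (F i); set b := Im (F i).
have [k0|k_gt0] := eqVneq k 0.
  have [-> ->] : A = 0 /\ B = 0 by rewrite k0 mul0r in IH; split; nra.
  by rewrite k0; nra.
have : 0 < k by rewrite lt_def k_gt0.
have : 0 <= (A - k * a) ^+ 2 + (B - k * b) ^+ 2 by rewrite addr_ge0 ?sqr_ge0.
nra.
Qed.

(* Each (z - r)^-1 lies in the disc [Im z * sqn u + Im u <= 0], the image of the
   half-plane [Im w >= Im z] under inversion; the disc is convex (Cauchy-Schwarz). *)
Lemma sum_inv_sub_bound (z : C) (rs : seq C) (n : nat) :
  0 < Im z -> all (fun r => Im r <= 0) rs -> (size rs <= n)%N ->
  Im z * sqn (\sum_(r <- rs) (z - r)^-1) + n%:R * Im (\sum_(r <- rs) (z - r)^-1) <= 0.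
Proof.
move=> Im_z_gt0 /allP rs_lower le_rs_n; set S := \sum_(r <- rs) _.
set T := \sum_(r <- rs) sqn (z - r)^-1.
have T_ge0 : 0 <= T by rewrite sumr_ge0 // => r _; rewrite sqn_ge0.
have ImS_bound : Im z * T + Im S <= 0.
  rewrite raddf_sum mulr_sumr -big_split big_seq sumr_le0 //= => r /rs_lower Im_r_le0.
  by rewrite Im_inv_bound // raddfB /=; lra.
have := sqn_sum_le rs (fun r => (z - r)^-1); rewrite -/S -/T.
set k : R := (size rs)%:R => CS.
have k_le_n : k <= n%:R by rewrite ler_nat.
have k_ge0 : 0 <= k by rewrite ler0n.
have ImS_le0 : Im S <= 0 by nra.
nra.
Qed.

(* Laguerre: a vanishing polar derivative would put y = z - N f(z) / f'(z) in the
   closed lower half-plane. *)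
Lemma polar_deriv_neq0 (f : {poly C}) (N : nat) (y z : C) : (0 < N)%N ->
  (size f <= N.+1)%N -> (forall w, 0 < Im w -> f.[w] != 0) ->
  0 < Im y -> 0 < Im z -> N%:R * f.[z] + (y - z) * f^`().[z] != 0.
Proof.
move=> N_gt0 size_f f_upper Im_y_gt0 Im_z_gt0.
have f_neq0 : f != 0 by apply: contraNneq (f_upper z Im_z_gt0) => ->; rewrite horner0.
have [rs f_eq] := closed_field_poly_normal f.
set c := lead_coef f in f_eq; set P := \prod_(r <- rs) _ in f_eq.
have c_neq0 : c != 0 by rewrite lead_coef_eq0.
have size_rs : (size rs <= N)%N.
  by move: size_f; rewrite f_eq size_scale // size_prod_XsubC.
have rs_lower : all (fun r => Im r <= 0) rs.
  apply/allP => r r_rs; rewrite leNgt; apply: contraTN (r_rs) => /f_upper.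
  by rewrite f_eq hornerZ mulf_eq0 negb_or => /andP[_]; rewrite -rootE root_prod_XsubC.
have Pz_neq0 : P.[z] != 0.
  by move: (f_upper z Im_z_gt0); rewrite f_eq hornerZ mulf_eq0 negb_or => /andP[].
have z_notin_rs : all (fun r => z != r) rs.
  apply/allP => r /(allP rs_lower) Im_r_le0; apply: contraTneq Im_r_le0 => <-.
  by rewrite -ltNge.
rewrite f_eq derivZ !hornerZ horner_deriv_prod_XsubC //.
set S := \sum_(r <- rs) _.
have -> : N%:R * (c * P.[z]) + (y - z) * (c * (P.[z] * S)) =
          (c * P.[z]) * (N%:R + (y - z) * S) by ring.
rewrite mulf_neq0 ?mulf_neq0 //; apply/eqP => polar_eq0.
have S_neq0 : S != 0.
  by apply: contra_eqN polar_eq0 => /eqP->; rewrite mulr0 addr0 pnatr_eq0 -lt0n.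
have yz_eq : y - z = - (S^-1 *+ N).
  rewrite -mulr_natl -mulNr -[y - z](mulfK S_neq0); congr (_ * _).
  by apply/eqP; rewrite -addr_eq0 addrC polar_eq0.
have ImS_eq : (Im y - Im z) * sqn S = N%:R * Im S.
  move/(congr1 Im): yz_eq; rewrite !raddfB /= => ->.
  rewrite raddfN raddfMn /= Im_inv sqn_inv -mulr_natr.
  by field; rewrite sqn_eq0.
have := sum_inv_sub_bound Im_z_gt0 rs_lower size_rs; rewrite -/S.
have sqnS_gt0 : 0 < sqn S by rewrite lt_def sqn_eq0 S_neq0 sqn_ge0.
have := mulr_gt0 Im_y_gt0 sqnS_gt0.
nra.
Qed.

(* The symbol phi' + (x - l) phi applied to X^n is, up to the factor n + 1, the
   polar derivative of phi(D) X^(n+1) at x - l. *)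
Lemma diffop_prod_XsubC_neq0 (phi : {poly C}) (ls : seq C) (x : C) :
  (forall w, 0 < Im w -> (diffop phi 'X^(size ls)).[w] != 0) ->
  all (fun l => 0 < Im (x - l)) ls ->
  (diffop phi (\prod_(l <- ls) ('X - l%:P))).[x] != 0.
Proof.
elim: ls phi => [|l ls IH] phi /= phi_upper.
  move=> _; have := phi_upper 'i%C; rewrite big_nil expr0 !diffop1 !hornerC.
  by apply; apply: ltr01.
case/andP=> Im_xl_gt0 ls_upper; rewrite big_cons horner_diffop_mulXsubC.
apply: IH ls_upper => w Im_w_gt0; set n := size ls.
set A := diffop phi 'X^n; set B := diffop phi^`() 'X^n.
set Q := diffop phi 'X^(n.+1).
have Q_eq : Q = 'X * A + B by rewrite /Q exprS diffop_mulX.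
have Q'_eq : Q^`() = n.+1%:R *: A.
  by rewrite /Q -diffop_deriv derivXn -scaler_nat diffopZr.
have size_Q : (size Q <= n.+2)%N by rewrite (leq_trans (size_diffop _ _)) ?size_polyXn.
have := polar_deriv_neq0 (ltn0Sn n) size_Q phi_upper Im_xl_gt0 Im_w_gt0.
rewrite diffopD diffopZ hornerD hornerZ -/A -/B Q'_eq Q_eq.
rewrite hornerD hornerZ hornerM hornerX; apply: contra => /eqP BA_eq0.
by apply/eqP; rewrite -[RHS](mulr0 n.+1%:R) -BA_eq0; ring.
Qed.

End UpperHalfPlane.

Section Hyperbolic.
Variable R : realType.
Implicit Types (p phi : {poly R}).
Local Notation toC := (real_complex R).

Lemma hyperbolicP p :
  hyperbolic p <-> exists2 c, c != 0 & exists s, p = c *: \prod_(x <- s) ('X - x%:P).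
Proof.
split=> [[p_neq0 [s p_eq]]|[c c_neq0 [s p_eq]]].
  by exists (lead_coef p); [rewrite lead_coef_eq0 | exists s].
have lc_p : lead_coef p = c by rewrite p_eq lead_coefZ lead_coef_prod_XsubC mulr1.
split; last by exists s; rewrite lc_p.
by rewrite -lead_coef_eq0 lc_p.
Qed.

Lemma hyperbolic_Xn n : hyperbolic ('X^n : {poly R}).
Proof.
apply/hyperbolicP; exists 1; rewrite ?oner_neq0 //; exists (nseq n 0).
rewrite scale1r; elim: n => [|n IH]; first by rewrite big_nil expr0.
by rewrite big_cons -IH subr0 exprS.
Qed.

Lemma hyperbolicZ c p : c != 0 -> hyperbolic p -> hyperbolic (c *: p).
Proof.
move=> c_neq0 /hyperbolicP[k k_neq0 [s ->]]; apply/hyperbolicP.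
by exists (c * k); [rewrite mulf_neq0 | exists s; rewrite scalerA].
Qed.

Lemma hyperbolic_comp_scale c p :
  c != 0 -> hyperbolic p -> hyperbolic (p \Po (c *: 'X)).
Proof.
move=> c_neq0 /hyperbolicP[k k_neq0 [s ->]]; apply/hyperbolicP.
exists (k * \prod_(x <- s) c).
  by rewrite mulf_neq0 // prodf_seq_neq0; apply/allP.
exists [seq x / c | x <- s]; rewrite comp_polyZ rmorph_prod big_map -scalerA.
rewrite -scaler_prod; congr (_ *: _); apply: eq_bigr => x _.
by rewrite /= comp_polyB comp_polyX comp_polyC scalerBr scale_polyC mulrC divfK.
Qed.

Lemma hyperbolic_upperP p :
  hyperbolic p <-> forall z : R[i], 0 < Im z -> (map_poly toC p).[z] != 0.
Proof.
split=> [/hyperbolicP[c c_neq0 [s ->]] z Im_z_gt0|p_upper].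
  rewrite map_polyZ map_prod_XsubC hornerZ mulf_neq0 ?fmorph_eq0 //.
  rewrite horner_prod prodf_seq_neq0; apply/allP => x _ /=.
  by rewrite hornerXsubC subr_eq0; apply: contraTneq Im_z_gt0 => ->; rewrite /= ltxx.
have p_neq0 : p != 0.
  apply/eqP => p_eq0; have := p_upper 'i%C; rewrite p_eq0 rmorph0 horner0 eqxx.
  by move/(_ ltr01).
have [rs p_eq] := closed_field_poly_normal (map_poly toC p).
have rs_real r : r \in rs -> r = toC (Re r).
  case: r => a b r_rs; have r_root : root (map_poly toC p) (a +i* b)%C.
    by rewrite p_eq rootZ ?root_prod_XsubC // lead_coef_eq0 map_poly_eq0.
  have conj_root : root (map_poly toC p) (a -i* b)%C.
    rewrite -[(a -i* b)%C]/((a +i* b)^*)%C -complex_root_conj -map_poly_comp.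
    suff -> : map_poly (conjc \o toC) p = map_poly toC p by [].
    by apply: eq_map_poly => x /=; rewrite oppr0.
  case: (ltgtP b 0) => [b_lt0|b_gt0|-> //].
  - by have := p_upper (a -i* b)%C; rewrite /= oppr_gt0 b_lt0 -rootE conj_root => /(_ isT).
  - by have := p_upper (a +i* b)%C; rewrite /= b_gt0 -rootE r_root => /(_ isT).
apply/hyperbolicP; exists (lead_coef p); first by rewrite lead_coef_eq0.
exists [seq Re r | r <- rs]; apply: (@map_inj_poly _ _ toC); [exact: complexI | exact: rmorph0 |].
rewrite map_polyZ map_prod_XsubC big_map p_eq lead_coef_map; congr (_ *: _).
by apply: eq_big_seq => r /rs_real {1}->.
Qed.

Lemma diffop_hyperbolic phi p : hyperbolic p ->
  hyperbolic (diffop phi 'X^((size p).-1)) -> hyperbolic (diffop phi p).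
Proof.
move=> /hyperbolicP[c c_neq0 [s p_eq]] /hyperbolic_upperP phi_upper.
have size_p : (size p).-1 = size s by rewrite p_eq size_scale // size_prod_XsubC.
apply/hyperbolic_upperP => z Im_z_gt0.
rewrite map_diffop p_eq map_polyZ map_prod_XsubC diffopZr hornerZ.
rewrite mulf_neq0 ?fmorph_eq0 // -(big_map toC predT (fun l => 'X - l%:P)).
apply: diffop_prod_XsubC_neq0.
  by move=> w /phi_upper; rewrite size_map -size_p map_diffop map_polyXn.
by apply/allP => _ /mapP[x _ ->]; rewrite raddfB /= subr0.
Qed.

End Hyperbolic.

Section Nuij.
Variables (R : realType) (d : nat) (a : 'I_d -> R).

Definition nuij_symbol (s : R) : {poly R} :=
  1 + \sum_(k < d) (a k * s ^+ k.+1) *: 'X^(k.+1).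

Lemma nuij_polyE p s : nuij_poly a p s = diffop (nuij_symbol s) p.
Proof.
rewrite diffopD -polyC1 diffopC scale1r diffop_sum; congr (_ + _).
by apply: eq_bigr => k _; rewrite diffopZ diffop_Xn.
Qed.

Lemma nuij_poly0 p : nuij_poly a p 0 = p.
Proof.
by rewrite /nuij_poly big1 ?addr0 // => k _; rewrite expr0n mulr0 scale0r.
Qed.

Lemma q_poly_nuij : q_poly a = nuij_poly a 'X^d 1.
Proof. by rewrite /nuij_poly; under eq_bigr do rewrite expr1n mulr1. Qed.

Lemma nuij_poly_Xn_scale s :
  s != 0 -> nuij_poly a 'X^d s = s ^+ d *: (q_poly a \Po (s^-1 *: 'X)).
Proof.
move=> s_neq0; have Xn_comp m : 'X^m \Po (s^-1 *: 'X) = s^-1 ^+ m *: 'X^m.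
  by rewrite rmorphXn /= comp_polyX exprZn.
rewrite comp_polyD Xn_comp scalerDr scalerA -exprMn mulfV // expr1n scale1r.
rewrite (big_morph _ (fun p q => comp_polyD p q _) (comp_poly0 _)) scaler_sumr.
congr (_ + _); apply: eq_bigr => k _.
rewrite derivnXn -scaler_nat !comp_polyZ Xn_comp !scalerA.
congr (_ *: _); rewrite -[in s ^+ d](subnK (ltn_ord k)) exprD exprVn.
by field; rewrite expf_neq0.
Qed.

Lemma hyperbolic_nuij_Xn s :
  hyperbolic (q_poly a) -> hyperbolic (nuij_poly a 'X^d s).
Proof.
have [->|s_neq0] := eqVneq s 0; first by rewrite nuij_poly0 => _; apply: hyperbolic_Xn.
move=> q_hyp; rewrite nuij_poly_Xn_scale //.
by apply: hyperbolicZ; [rewrite expf_neq0 | apply: hyperbolic_comp_scale; rewrite ?invr_eq0].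
Qed.

End Nuij.

Theorem theoremA (R : realType) (d : nat) (a : 'I_d -> R) :
  (1 <= d)%N -> (is_Nuij a <-> hyperbolic (q_poly a)).
Proof.
move=> _; split=> [a_Nuij | q_hyp].
  by rewrite q_poly_nuij; apply: a_Nuij (hyperbolic_Xn _ _) _; rewrite size_polyXn.
move=> p size_p p_hyp s; rewrite nuij_polyE; apply: diffop_hyperbolic => //.
by rewrite size_p -nuij_polyE; apply: hyperbolic_nuij_Xn.
Qed.
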